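(* Let $N\in\mathbb{N}$ with $N\ge3$, let $n\in\mathbb{N}$ with $n\ge17$, and let $x\in\mathbb{R}$ with $|x|\le n^{-\frac18}$. Put \[ y:=\frac{\pi\sqrt{24n+1}}{3\sqrt2}\sum_{m=2}^{2N+5}(-1)^m\binom{\frac12}{m}x^{2m}. \] Then there are real numbers $E_1,E_2$ with $|E_1|\le\frac{0.7^{N+2}}{(N+2)!}x^{4N+8}n^{\frac{N+2}{2}}$ and $|E_2|\le 0.4\,n^{-\frac{N+2}{2}}$ such that \[ e^{\frac{\pi}{3\sqrt2}\sqrt{(1-x^2)(24n+1)}}=e^{\frac{\pi\sqrt{24n+1}}{3\sqrt2}\left(1-\frac{x^2}{2}\right)}\left(\sum_{j=0}^{N+1}\frac{y^j}{j!}+E_1\right)(1+E_2). \] *)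

From Stdlib Require Import Reals Lra Arith Factorial.
Open Scope R_scope.

Fixpoint falling (a : R) (m : nat) : R :=
  match m with
  | O => 1
  | S k => falling a k * (a - INR k)
  end.

Definition gbinom (a : R) (m : nat) : R := falling a m / INR (fact m).

(* sum_{m = lo}^{hi} f m  (empty if hi < lo) *)
Fixpoint sum_range_aux (f : nat -> R) (lo : nat) (len : nat) : R :=
  match len with
  | O => 0
  | S k => sum_range_aux f lo k + f (lo + k)%nat
  end.

Definition sum_range (f : nat -> R) (lo hi : nat) : R :=
  sum_range_aux f lo (S hi - lo).

(* Put t = x^2, s = sqrt (1 - t) and let T(u) = sum_(m <= M) d_m u^m, with
   d_m = (-1)^m binom(1/2, m), be the Taylor polynomial of degree M = 2N+5 of
   sqrt (1 - u) at 0, so that y = c (T(t) - (1 - t/2)).  Then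
   c s = c (1 - t/2) + y - c (T(t) - s), so one may take E1 = e^y minus its
   Taylor polynomial of degree N+1 and E2 = e^(-c (T(t) - s)) - 1.
   All binomial coefficients of sqrt (1 - u) past the constant term are
   nonpositive, hence T(t) <= 1 - t/2 and y <= 0: Lagrange's remainder gives
   |E1| <= |y|^(N+2)/(N+2)!, and |y| <= c (1 - t/2 - s) <= 0.7 sqrt n t^2.
   For E2, T satisfies 2 (1 - u) T' + T = 2 (M+1) |d_(M+1)| u^M, so
   (T / sqrt (1 - u))' = (M+1) |d_(M+1)| u^M / (1 - u)^(3/2) >= 0; integrating
   gives 0 <= T(t) - s <= |d_(M+1)| t^(M+1) / (1 - t), which is tiny because
   t^2 <= n^(-1/2). *)

From Stdlib Require Import Reals Lra Lia Factorial.
From Coquelicot Require Import Coquelicot.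
Open Scope R_scope.

Lemma derivable_pt_lim_le_increment (f g f' g' : R -> R) (a b : R) : a <= b ->
  (forall u, a <= u <= b -> derivable_pt_lim f u (f' u)) ->
  (forall u, a <= u <= b -> derivable_pt_lim g u (g' u)) ->
  (forall u, a <= u <= b -> f' u <= g' u) ->
  f b - f a <= g b - g a.
Proof.
  intros [Hab | ->] Hf Hg Hfg; [|lra].
  destruct (MVT_cor2 (fun u => f u - g u) (fun u => f' u - g' u) a b Hab)
    as [c [Hc Hcab]].
  - intros u Hu; apply derivable_pt_lim_minus; auto.
  - assert (f' c - g' c <= 0) by (apply Rle_minus, Hfg; lra).
    nra.
Qed.

Lemma ex_derive_n_exp (k : nat) (u : R) : ex_derive_n exp k u.
Proof. destruct k as [|j]; [exact I | eexists; apply (is_derive_n_exp (S j))]. Qed.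

Lemma Derive_n_exp_opp (k : nat) (u : R) :
  Derive_n (fun v => exp (- v)) k u = (-1) ^ k * exp (- u).
Proof.
  rewrite Derive_n_comp_opp by (apply filter_forall; intros; apply ex_derive_n_exp).
  now rewrite (is_derive_n_unique _ _ _ _ (is_derive_n_exp k (- u))).
Qed.

(* Lagrange's remainder for [v |-> exp (- v)] between 0 and [- y]; the
   derivative factor [exp (- z)] is at most 1. *)
Lemma exp_taylor_remainder_nonpos (k : nat) (y : R) : y <= 0 ->
  Rabs (exp y - sum_f_R0 (fun j => y ^ j / INR (fact j)) k)
    <= Rabs y ^ S k / INR (fact (S k)).
Proof.
  intros [Hy | ->].
  2: { replace (sum_f_R0 (fun j => 0 ^ j / INR (fact j)) k) with 1.
       - rewrite exp_0, Rminus_diag, Rabs_R0, pow_ne_zero by lia; unfold Rdiv; lra.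
       - induction k as [|k IH]; [simpl; field|].
         cbn [sum_f_R0 pow]; rewrite <- IH; unfold Rdiv; ring. }
  destruct (Taylor_Lagrange (fun v => exp (- v)) k 0 (- y)) as [z [Hz Htaylor]];
    [lra | intros; apply ex_derive_n_comp_opp, filter_forall; intros; apply ex_derive_n_exp |].
  rewrite Ropp_involutive in Htaylor.
  rewrite (sum_eq _ (fun j => y ^ j / INR (fact j))) in Htaylor.
  2: { intros j _; rewrite Derive_n_exp_opp, Ropp_0, exp_0, Rminus_0_r, Rmult_1_r.
       replace (y ^ j) with ((- y) ^ j * (-1) ^ j) by (rewrite <- Rpow_mult_distr; f_equal; ring).
       unfold Rdiv; ring. }
  rewrite Htaylor, Rplus_minus_l, Derive_n_exp_opp, Rminus_0_r, (Rabs_left y Hy).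
  set (a := (- y) ^ S k / INR (fact (S k))).
  assert (Ha : 0 <= a).
  { apply Rmult_le_pos; [apply pow_le; lra | left; apply Rinv_0_lt_compat, INR_fact_lt_0]. }
  assert (exp (- z) < 1) by (rewrite <- exp_0; apply exp_increasing; lra).
  pose proof (exp_pos (- z)).
  rewrite Rabs_mult, (Rabs_pos_eq a Ha), Rabs_mult, pow_1_abs, (Rabs_pos_eq (exp (- z))) by lra.
  nra.
Qed.

Lemma abs_exp_opp_sub_1_le (a : R) : 0 <= a -> Rabs (exp (- a) - 1) <= a.
Proof.
  intros Ha; pose proof (exp_ineq1_le (- a)).
  assert (exp (- a) <= 1).
  { destruct Ha as [Ha | <-]; [left | rewrite Ropp_0, exp_0; lra].
    rewrite <- exp_0; apply exp_increasing; lra. }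
  rewrite Rabs_left1; lra.
Qed.

Lemma linear_le_sqrt (a b : R) : 0 <= b -> b * b <= a -> b <= sqrt a.
Proof.
  intros Hb Hab; rewrite <- (sqrt_square b Hb); apply sqrt_le_1_alt, Hab.
Qed.

Lemma PI_le_334 : PI <= 334 / 100.
Proof.
  destruct (PI_ineq 2) as [_ H]; unfold tg_alt, PI_tg in H; simpl in H; lra.
Qed.

Lemma PI_sqrt_24_bounds (a : R) : 1 <= a ->
  0 <= PI * sqrt (24 * a + 1) / (3 * sqrt 2) <= 401 / 100 * sqrt a.
Proof.
  intros Ha.
  assert (H5 : sqrt (24 * a + 1) <= 5 * sqrt a).
  { rewrite <- (sqrt_square 5), <- sqrt_mult_alt by lra; apply sqrt_le_1_alt; lra. }
  assert (H2 : 1414 / 1000 <= sqrt 2) by (apply linear_le_sqrt; lra).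
  pose proof PI_le_334; pose proof PI_RGT_0; pose proof (sqrt_pos (24 * a + 1));
    pose proof (sqrt_pos a).
  split; [apply Rmult_le_pos; [nra | left; apply Rinv_0_lt_compat; lra]|].
  apply Rmult_le_reg_r with (3 * sqrt 2); [lra|].
  unfold Rdiv; rewrite Rmult_assoc, Rinv_l, Rmult_1_r by lra.
  apply Rle_trans with (334 / 100 * (5 * sqrt a)); [apply Rmult_le_compat; lra | nra].
Qed.

Lemma Rpower_half_nat (a : R) (k : nat) : 0 < a ->
  Rpower a (INR k / 2) = sqrt a ^ k.
Proof.
  intros Ha; replace (INR k / 2) with (/ 2 * INR k) by field.
  rewrite <- Rpower_mult, Rpower_sqrt by exact Ha.
  apply Rpower_pow, sqrt_lt_R0, Ha.
Qed.

Lemma pow4_le_inv_sqrt (a x : R) : 0 < a -> Rabs x <= Rpower a (- (1/8)) ->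
  x ^ 4 <= / sqrt a.
Proof.
  intros Ha Hx.
  assert (Hq : / sqrt a = Rpower a (- (1/8)) ^ 4).
  { rewrite <- Rpower_pow, Rpower_mult by apply exp_pos.
    replace (- (1/8) * INR 4) with (- (INR 1 / 2)) by (simpl; field).
    rewrite Rpower_Ropp, Rpower_half_nat, pow_1 by exact Ha; reflexivity. }
  rewrite Hq; apply Rle_trans with (Rabs x ^ 4); [rewrite RPow_abs; apply Rle_abs|].
  apply pow_incr; split; [apply Rabs_pos | exact Hx].
Qed.

Lemma sum_range_aux_from_2 (f : nat -> R) (k : nat) :
  sum_range_aux f 2 k = sum_f_R0 f (S k) - f 0%nat - f 1%nat.
Proof.
  induction k as [|k IH]; cbn [sum_range_aux]; [simpl; ring|].
  rewrite IH; replace (2 + k)%nat with (S (S k)) by lia; cbn [sum_f_R0]; ring.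
Qed.

Definition sqrt1m_coef (m : nat) : R := (-1) ^ m * gbinom (1/2) m.

Lemma sqrt1m_coef_0 : sqrt1m_coef 0 = 1.
Proof. unfold sqrt1m_coef, gbinom; simpl; field. Qed.

Lemma sqrt1m_coef_1 : sqrt1m_coef 1 = - (1/2).
Proof. unfold sqrt1m_coef, gbinom; simpl; field. Qed.

Lemma sqrt1m_coef_4 : sqrt1m_coef 4 = - (5/128).
Proof. unfold sqrt1m_coef, gbinom; simpl; field. Qed.

Lemma sqrt1m_coef_S (m : nat) :
  sqrt1m_coef (S m) * (INR m + 1) = sqrt1m_coef m * (INR m - 1/2).
Proof.
  unfold sqrt1m_coef, gbinom; cbn [falling pow].
  rewrite fact_simpl, mult_INR, S_INR.
  pose proof (INR_fact_neq_0 m); pose proof (pos_INR m).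
  field; lra.
Qed.

Lemma sqrt1m_coef_nonpos (m : nat) : (1 <= m)%nat -> sqrt1m_coef m <= 0.
Proof.
  induction 1 as [|m Hm IH]; [rewrite sqrt1m_coef_1; lra|].
  pose proof (sqrt1m_coef_S m); assert (1 <= INR m) by (apply (le_INR 1); lia).
  nra.
Qed.

Lemma sqrt1m_coef_le_S (m : nat) : (1 <= m)%nat -> sqrt1m_coef m <= sqrt1m_coef (S m).
Proof.
  intros Hm; pose proof (sqrt1m_coef_S m); pose proof (sqrt1m_coef_nonpos m Hm).
  assert (1 <= INR m) by (apply (le_INR 1); lia).
  nra.
Qed.

Lemma sqrt1m_coef_ge (m : nat) : (4 <= m)%nat -> - (5/128) <= sqrt1m_coef m.
Proof.
  induction 1 as [|m Hm IH]; [rewrite sqrt1m_coef_4; lra|].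
  apply (Rle_trans _ _ _ IH), sqrt1m_coef_le_S; lia.
Qed.

Definition sqrt1m_taylor (M : nat) (u : R) : R :=
  sum_f_R0 (fun m => sqrt1m_coef m * u ^ m) M.

Definition sqrt1m_taylor_deriv (M : nat) (u : R) : R :=
  sum_f_R0 (fun m => sqrt1m_coef m * (INR m * u ^ pred m)) M.

Lemma sqrt1m_taylor_0 (M : nat) : sqrt1m_taylor M 0 = 1.
Proof.
  induction M as [|M IH]; unfold sqrt1m_taylor in *; simpl.
  - rewrite sqrt1m_coef_0; ring.
  - rewrite IH; ring.
Qed.

Lemma derivable_pt_lim_sqrt1m_taylor (M : nat) (u : R) :
  derivable_pt_lim (sqrt1m_taylor M) u (sqrt1m_taylor_deriv M u).
Proof.
  induction M as [|M IH]; unfold sqrt1m_taylor, sqrt1m_taylor_deriv; cbn [sum_f_R0].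
  - apply (derivable_pt_lim_scal (fun v => v ^ 0)), derivable_pt_lim_pow.
  - apply (derivable_pt_lim_plus _ (fun v => sqrt1m_coef (S M) * v ^ S M)); [exact IH|].
    apply (derivable_pt_lim_scal (fun v => v ^ S M)), derivable_pt_lim_pow.
Qed.

(* [sqrt (1 - u)] solves [2 (1 - u) f' + f = 0]; its Taylor polynomial does so
   up to a single monomial. *)
Lemma sqrt1m_taylor_ode (M : nat) (u : R) :
  2 * (1 - u) * sqrt1m_taylor_deriv M u + sqrt1m_taylor M u
  = - 2 * (INR M + 1) * sqrt1m_coef (S M) * u ^ M.
Proof.
  induction M as [|M IH]; unfold sqrt1m_taylor, sqrt1m_taylor_deriv in *.
  - pose proof (sqrt1m_coef_S 0); simpl in *; rewrite sqrt1m_coef_0 in *; lra.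
  - cbn [sum_f_R0 pred pow]; rewrite !S_INR.
    set (a := sqrt1m_coef (S M)) in *.
    transitivity (-2 * (INR M + 1) * a * u ^ M + 2 * (1 - u) * (a * ((INR M + 1) * u ^ M))
                  + a * (u * u ^ M)); [rewrite <- IH; ring|].
    pose proof (sqrt1m_coef_S (S M)) as Hrec; rewrite S_INR in Hrec; fold a in Hrec.
    replace (-2 * (INR M + 1 + 1) * sqrt1m_coef (S (S M)) * (u * u ^ M))
      with (-2 * (sqrt1m_coef (S (S M)) * (INR M + 1 + 1)) * (u * u ^ M)) by ring.
    rewrite Hrec; field.
Qed.

Lemma derivable_pt_lim_sqrt1m (u : R) : u < 1 ->
  derivable_pt_lim (fun v => sqrt (1 - v)) u (- / (2 * sqrt (1 - u))).
Proof.
  intros Hu.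
  replace (- / (2 * sqrt (1 - u))) with (/ (2 * sqrt (1 - u)) * (0 - 1)) by ring.
  apply (derivable_pt_lim_comp (fun v => 1 - v) sqrt).
  - apply derivable_pt_lim_minus; [apply derivable_pt_lim_const | apply derivable_pt_lim_id].
  - apply derivable_pt_lim_sqrt; lra.
Qed.

Lemma derivable_pt_lim_sqrt1m_taylor_div (M : nat) (u : R) : u < 1 ->
  derivable_pt_lim (fun v => sqrt1m_taylor M v / sqrt (1 - v)) u
    ((INR M + 1) * - sqrt1m_coef (S M) * u ^ M / ((1 - u) * sqrt (1 - u))).
Proof.
  intros Hu.
  assert (Hs : 0 < sqrt (1 - u)) by (apply sqrt_lt_R0; lra).
  assert (Hss : sqrt (1 - u) * sqrt (1 - u) = 1 - u) by (apply sqrt_sqrt; lra).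
  pose proof (derivable_pt_lim_div _ _ u _ _ (derivable_pt_lim_sqrt1m_taylor M u)
                (derivable_pt_lim_sqrt1m u Hu) ltac:(lra)) as Hdiv.
  match type of Hdiv with derivable_pt_lim _ _ ?l => replace (_ / _) with l end;
    [exact Hdiv|].
  pose proof (sqrt1m_taylor_ode M u) as Hode; unfold Rsqr.
  set (s := sqrt (1 - u)) in *.
  rewrite <- Hss in Hode |- *.
  transitivity ((2 * (s * s) * sqrt1m_taylor_deriv M u + sqrt1m_taylor M u) / (2 * (s * s * s)));
    [field; lra | rewrite Hode; field; lra].
Qed.

Lemma sqrt1m_taylor_div_increment (M : nat) (t : R) : (1 <= M)%nat -> 0 <= t < 1 ->
  0 <= sqrt1m_taylor M t / sqrt (1 - t) - 1
    <= - sqrt1m_coef (S M) * t ^ S M / ((1 - t) * sqrt (1 - t)).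
Proof.
  intros HM Ht.
  set (g := fun v => sqrt1m_taylor M v / sqrt (1 - v)).
  set (g' := fun u => (INR M + 1) * - sqrt1m_coef (S M) * u ^ M / ((1 - u) * sqrt (1 - u))).
  set (K := - sqrt1m_coef (S M) / ((1 - t) * sqrt (1 - t))).
  assert (He : 0 <= - sqrt1m_coef (S M))
    by (pose proof (sqrt1m_coef_nonpos (S M) ltac:(lia)); lra).
  assert (Hg0 : g 0 = 1) by (unfold g; rewrite sqrt1m_taylor_0, Rminus_0_r, sqrt_1; field).
  assert (Hg : forall u, 0 <= u <= t -> derivable_pt_lim g u (g' u))
    by (intros u Hu; apply derivable_pt_lim_sqrt1m_taylor_div; lra).
  assert (Hg'K : forall u, 0 <= u <= t -> 0 <= g' u <= K * (INR (S M) * u ^ pred (S M))).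
  { intros u Hu; unfold g', K, Rdiv; cbn [pred]; rewrite S_INR.
    assert (Hsu : sqrt (1 - t) <= sqrt (1 - u)) by (apply sqrt_le_1_alt; lra).
    assert (Hs : 0 < sqrt (1 - t)) by (apply sqrt_lt_R0; lra).
    assert (HA : 0 <= (INR M + 1) * - sqrt1m_coef (S M) * u ^ M).
    { pose proof (pos_INR M); pose proof (pow_le u M (proj1 Hu)).
      apply Rmult_le_pos; [apply Rmult_le_pos|]; lra. }
    assert (HB : / ((1 - u) * sqrt (1 - u)) <= / ((1 - t) * sqrt (1 - t))).
    { apply Rinv_le_contravar; [apply Rmult_lt_0_compat; lra | apply Rmult_le_compat; lra]. }
    split; [apply Rmult_le_pos; [exact HA | left; apply Rinv_0_lt_compat, Rmult_lt_0_compat; lra]|].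
    replace (- sqrt1m_coef (S M) * / ((1 - t) * sqrt (1 - t)) * ((INR M + 1) * u ^ M))
      with ((INR M + 1) * - sqrt1m_coef (S M) * u ^ M * / ((1 - t) * sqrt (1 - t))) by ring.
    apply Rmult_le_compat_l; assumption. }
  replace (sqrt1m_taylor M t / sqrt (1 - t) - 1) with (g t - g 0) by (rewrite Hg0; reflexivity).
  split.
  - replace 0 with (0 - 0) at 1 by ring.
    apply (derivable_pt_lim_le_increment (fun _ => 0) g (fun _ => 0) g' 0 t);
      [lra | intros; apply derivable_pt_lim_const | exact Hg |].
    intros u Hu; apply Hg'K, Hu.
  - replace (- sqrt1m_coef (S M) * t ^ S M / ((1 - t) * sqrt (1 - t)))
      with (K * t ^ S M - K * 0 ^ S M) by (rewrite pow_ne_zero by lia; unfold K; field;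
                                           pose proof (sqrt_lt_R0 (1 - t)); split; lra).
    apply (derivable_pt_lim_le_increment g (fun v => K * v ^ S M) g'
             (fun v => K * (INR (S M) * v ^ pred (S M))) 0 t);
      [lra | exact Hg | intros; apply derivable_pt_lim_scal, derivable_pt_lim_pow |].
    intros u Hu; apply Hg'K, Hu.
Qed.

Lemma sqrt1m_taylor_remainder (M : nat) (t : R) : (1 <= M)%nat -> 0 <= t < 1 ->
  0 <= sqrt1m_taylor M t - sqrt (1 - t)
    <= - sqrt1m_coef (S M) * t ^ S M / (1 - t).
Proof.
  intros HM Ht.
  destruct (sqrt1m_taylor_div_increment M t HM Ht) as [Hlo Hhi].
  assert (Hs : 0 < sqrt (1 - t)) by (apply sqrt_lt_R0; lra).
  replace (sqrt1m_taylor M t - sqrt (1 - t))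
    with ((sqrt1m_taylor M t / sqrt (1 - t) - 1) * sqrt (1 - t)) by (field; lra).
  replace (- sqrt1m_coef (S M) * t ^ S M / (1 - t))
    with (- sqrt1m_coef (S M) * t ^ S M / ((1 - t) * sqrt (1 - t)) * sqrt (1 - t))
    by (field; lra).
  split; [apply Rmult_le_pos | apply Rmult_le_compat_r]; lra.
Qed.

Lemma sqrt1m_taylor_le_linear (M : nat) (t : R) : (1 <= M)%nat -> 0 <= t ->
  sqrt1m_taylor M t <= 1 - t / 2.
Proof.
  intros HM Ht; induction HM as [|M HM IH].
  - unfold sqrt1m_taylor; simpl; rewrite sqrt1m_coef_0, sqrt1m_coef_1; lra.
  - unfold sqrt1m_taylor in *; cbn [sum_f_R0].
    pose proof (sqrt1m_coef_nonpos (S M) ltac:(lia)); pose proof (pow_le t (S M) Ht).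
    assert (sqrt1m_coef (S M) * t ^ S M <= 0) by nra.
    lra.
Qed.

Lemma one_sub_half_sub_sqrt1m_le (t : R) : 0 <= t <= 1/2 ->
  1 - t / 2 - sqrt (1 - t) <= 10 / 58 * t ^ 2.
Proof.
  intros Ht.
  assert (Hs : 7071 / 10000 <= sqrt (1 - t)) by (apply linear_le_sqrt; lra).
  assert (Hss : sqrt (1 - t) * sqrt (1 - t) = 1 - t) by (apply sqrt_sqrt; lra).
  (* With [s = sqrt (1 - t)]: [(1 - t/2 - s) (1 - t/2 + s) = t^2 / 4] and
     [1 - t/2 + s >= 58/40]. *)
  nra.
Qed.

Lemma sum_range_sqrt1m_coef (M : nat) (x : R) : (1 <= M)%nat ->
  sum_range (fun m => (-1) ^ m * gbinom (1/2) m * x ^ (2 * m)) 2 M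
  = sqrt1m_taylor M (x ^ 2) - (1 - x ^ 2 / 2).
Proof.
  intros HM; unfold sum_range, sqrt1m_taylor.
  replace (S M - 2)%nat with (M - 1)%nat by lia.
  rewrite sum_range_aux_from_2; replace (S (M - 1)) with M by lia.
  rewrite (sum_eq _ (fun m => sqrt1m_coef m * (x ^ 2) ^ m))
    by (intros; unfold sqrt1m_coef; rewrite pow_mult; reflexivity).
  unfold gbinom; simpl; field.
Qed.

Lemma sqrt1m_shift_bounds (M : nat) (c t q : R) : (1 <= M)%nat ->
  0 <= c <= 401 / 100 * q -> 0 <= t <= 1/2 ->
  let y := c * (sqrt1m_taylor M t - (1 - t / 2)) in
  y <= 0 /\ Rabs y <= 7 / 10 * q * t ^ 2.
Proof.
  intros HM Hc Ht y.
  pose proof (sqrt1m_taylor_le_linear M t HM (proj1 Ht)).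
  pose proof (sqrt1m_taylor_remainder M t HM ltac:(lra)).
  pose proof (one_sub_half_sub_sqrt1m_le t Ht).
  assert (Hy : y <= 0) by (unfold y; nra).
  split; [exact Hy|].
  rewrite Rabs_left1 by exact Hy; unfold y.
  apply Rle_trans with (c * (10 / 58 * t ^ 2)); [nra|].
  pose proof (pow2_ge_0 t); nra.
Qed.

Lemma sqrt1m_remainder_scaled_le (K : nat) (c t q : R) : 0 < q ->
  0 <= c <= 401 / 100 * q -> 0 <= t <= 1/2 -> t ^ 2 <= / q ->
  0 <= c * (sqrt1m_taylor (2 * K + 5) t - sqrt (1 - t)) <= 4 / 10 * (/ q) ^ (K + 2).
Proof.
  intros Hq Hc Ht Ht2.
  destruct (sqrt1m_taylor_remainder (2 * K + 5) t ltac:(lia) ltac:(lra)) as [Hr0 Hr].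
  pose proof (sqrt1m_coef_ge (S (2 * K + 5)) ltac:(lia)).
  assert (Htpow : t ^ S (2 * K + 5) <= / q * (/ q) ^ (K + 2)).
  { change (/ q * (/ q) ^ (K + 2)) with ((/ q) ^ S (K + 2)).
    replace (S (2 * K + 5)) with (2 * S (K + 2))%nat by lia.
    rewrite pow_mult; apply pow_incr; split; [apply pow2_ge_0 | exact Ht2]. }
  assert (Hr' : sqrt1m_taylor (2 * K + 5) t - sqrt (1 - t) <= 5 / 64 * (/ q * (/ q) ^ (K + 2))).
  { apply (Rle_trans _ _ _ Hr).
    set (b := / q * (/ q) ^ (K + 2)) in *.
    pose proof (pow_le t (S (2 * K + 5)) (proj1 Ht)).
    assert (0 <= b) by lra.
    apply Rmult_le_reg_r with (1 - t); [lra|].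
    unfold Rdiv; rewrite Rmult_assoc, Rinv_l, Rmult_1_r by lra.
    assert (0 <= (5 / 128 + sqrt1m_coef (S (2 * K + 5))) * t ^ S (2 * K + 5)) by
      (apply Rmult_le_pos; lra).
    assert (0 <= (1 / 2 - t) * b) by (apply Rmult_le_pos; lra).
    lra. }
  split; [apply Rmult_le_pos; lra|].
  pose proof (pow_le (/ q) (K + 2) (Rlt_le _ _ (Rinv_0_lt_compat q Hq))).
  apply Rle_trans with (401 / 100 * q * (5 / 64 * (/ q * (/ q) ^ (K + 2)))).
  - apply Rmult_le_compat; lra.
  - replace (401 / 100 * q * (5 / 64 * (/ q * (/ q) ^ (K + 2))))
      with (2005 / 6400 * (/ q) ^ (K + 2)) by (field; lra).
    nra.
Qed.

Lemma exp_sqrt1m_expansion (K : nat) (c t q : R) :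
  4 <= q -> 0 <= c <= 401 / 100 * q -> 0 <= t -> t ^ 2 <= / q ->
  let y := c * (sqrt1m_taylor (2 * K + 5) t - (1 - t / 2)) in
  exists E1 E2 : R,
    Rabs E1 <= (7/10) ^ (K + 2) / INR (fact (K + 2)) * (t ^ 2) ^ (K + 2) * q ^ (K + 2) /\
    Rabs E2 <= 4/10 * (/ q) ^ (K + 2) /\
    exp (c * sqrt (1 - t))
      = exp (c * (1 - t / 2))
        * (sum_f_R0 (fun j => y ^ j / INR (fact j)) (K + 1) + E1) * (1 + E2).
Proof.
  intros Hq Hc Ht Ht2 y.
  assert (Ht' : 0 <= t <= 1/2).
  { assert (/ q <= / 4) by (apply Rinv_le_contravar; lra).
    split; [exact Ht | nra]. }
  destruct (sqrt1m_shift_bounds (2 * K + 5) c t q ltac:(lia) Hc Ht') as [Hy Hyabs].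
  set (r := c * (sqrt1m_taylor (2 * K + 5) t - sqrt (1 - t))).
  pose proof (sqrt1m_remainder_scaled_le K c t q ltac:(lra) Hc Ht' Ht2) as Hr.
  exists (exp y - sum_f_R0 (fun j => y ^ j / INR (fact j)) (K + 1)), (exp (- r) - 1).
  split; [|split].
  - eapply Rle_trans; [apply exp_taylor_remainder_nonpos, Hy|].
    replace (S (K + 1)) with (K + 2)%nat by lia.
    pose proof (INR_fact_lt_0 (K + 2)).
    apply Rle_trans with ((7 / 10 * q * t ^ 2) ^ (K + 2) / INR (fact (K + 2))).
    + unfold Rdiv; apply Rmult_le_compat_r; [left; apply Rinv_0_lt_compat; lra|].
      apply pow_incr; split; [apply Rabs_pos | exact Hyabs].
    + apply Req_le; rewrite !Rpow_mult_distr; field; lra.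
  - apply (Rle_trans _ _ _ (abs_exp_opp_sub_1_le r (proj1 Hr)) (proj2 Hr)).
  - set (T := sum_f_R0 (fun j => y ^ j / INR (fact j)) (K + 1)).
    replace (T + (exp y - T)) with (exp y) by ring.
    replace (1 + (exp (- r) - 1)) with (exp (- r)) by ring.
    rewrite <- !exp_plus; f_equal; unfold y, r; ring.
Qed.

Theorem lemma3p3 (N n : nat) (x : R)
  (hN : (3 <= N)%nat) (hn : (17 <= n)%nat)
  (hx : Rabs x <= Rpower (INR n) (- (1/8))) :
  let c := PI * sqrt (24 * INR n + 1) / (3 * sqrt 2) in
  let y := c * sum_range (fun m => (-1) ^ m * gbinom (1/2) m * x ^ (2 * m)) 2 (2 * N + 5) in
  exists E1 E2 : R,
    Rabs E1 <= (7/10) ^ (N + 2) / INR (fact (N + 2)) * x ^ (4 * N + 8)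
                 * Rpower (INR n) (INR (N + 2) / 2) /\
    Rabs E2 <= (4/10) * Rpower (INR n) (- (INR (N + 2) / 2)) /\
    exp (PI / (3 * sqrt 2) * sqrt ((1 - x ^ 2) * (24 * INR n + 1)))
      = exp (c * (1 - x ^ 2 / 2))
        * (sum_f_R0 (fun j => y ^ j / INR (fact j)) (N + 1) + E1) * (1 + E2).
Proof.
  intros c y.
  assert (Hn : 17 <= INR n) by (apply le_INR in hn; simpl in hn; lra).
  assert (Hq : 4 <= sqrt (INR n)) by (apply linear_le_sqrt; lra).
  assert (Hx4 : (x ^ 2) ^ 2 <= / sqrt (INR n)).
  { replace ((x ^ 2) ^ 2) with (x ^ 4) by ring; apply pow4_le_inv_sqrt; lra. }
  destruct (exp_sqrt1m_expansion N c (x ^ 2) (sqrt (INR n)) Hq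
              (PI_sqrt_24_bounds (INR n) ltac:(lra)) (pow2_ge_0 x) Hx4)
    as (E1 & E2 & HE1 & HE2 & Hexp).
  exists E1, E2.
  rewrite Rpower_Ropp, !Rpower_half_nat, <- pow_inv by lra.
  rewrite <- !pow_mult in HE1; replace (2 * (2 * (N + 2)))%nat with (4 * N + 8)%nat in HE1 by lia.
  split; [exact HE1 | split; [exact HE2|]].
  assert (Hx1 : x ^ 2 <= 1).
  { assert (/ sqrt (INR n) <= / 4) by (apply Rinv_le_contravar; lra).
    pose proof (pow2_ge_0 x); nra. }
  rewrite sqrt_mult, Rmult_comm, Rmult_assoc by lra.
  replace (sqrt (24 * INR n + 1) * (PI / (3 * sqrt 2))) with c
    by (unfold c; pose proof (sqrt_lt_R0 2 ltac:(lra)); field; lra).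
  unfold y; rewrite sum_range_sqrt1m_coef by lia.
  rewrite Rmult_comm; exact Hexp.
Qed.
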